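(* Let $X$ be a Banach space, $C\subset X$ a nonempty generalized polyhedral convex set, and $f(x)=\frac12\langle Mx,x\rangle+\langle q,x\rangle+\alpha$, where $M:X\to X^*$ is a bounded linear operator which is symmetric ($\langle Mx,y\rangle=\langle My,x\rangle$ for all $x,y\in X$), $q\in X^*$, $\alpha\in\mathbb R$. If $\bar x$ is a local minimum of $\min\{f(x)\mid x\in C\}$, then: (c0) $\langle M\bar x+q,v\rangle\ge0$ for all $v\in T_C(\bar x)$; (c1') for every $v\in T_C(\bar x)$ with $\langle M\bar x+q,v\rangle=0$, one has $\langle M\bar x+q,w\rangle\ge0$ for all $w\in T^2_C(\bar x,v)$; (c2') $\langle Mv,v\rangle\ge 0$ for all $v\in T_C(\bar x)$ with $\langle M\bar x+q,v\rangle=0$. *)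

From HB Require Import structures.
From mathcomp Require Import all_boot all_order all_algebra.
From mathcomp Require Import all_classical all_reals all_analysis.
Set Implicit Arguments. Unset Strict Implicit. Unset Printing Implicit Defensive.
Import Order.TTheory GRing.Theory Num.Theory.
Import numFieldNormedType.Exports.
Local Open Scope classical_set_scope.
Local Open Scope ring_scope.

Section Defs.
Context {R : realType} {X : normedModType R}.

Definition lin_functional (f : X -> R) : Prop :=
  forall (a : R) (x y : X), f (a *: x + y) = a * f x + f y.

Definition dual_elem (f : X -> R) : Prop := lin_functional f /\ continuous f.

Definition closed_affine_subspace (L : set X) : Prop :=
  closed L /\ L !=set0 /\
  forall (x y : X) (t : R), L x -> L y -> L ((1 - t) *: x + t *: y).

Definition gen_polyhedral_convex (C : set X) : Prop :=
  exists (p : nat) (xs : 'I_p -> X -> R) (a : 'I_p -> R) (L : set X),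
    (forall i, dual_elem (xs i)) /\ closed_affine_subspace L /\
    C = [set x | L x /\ forall i, xs i x <= a i].

Definition tangent_cone (C : set X) (xb : X) : set X :=
  [set v | exists (t : nat -> R) (vs : nat -> X),
      (forall k, 0 < t k) /\ t @ \oo --> 0 /\ vs @ \oo --> v /\
      (forall k, C (xb + t k *: vs k))].

Definition second_tangent_set (C : set X) (xb v : X) : set X :=
  [set w | exists (t : nat -> R) (ws : nat -> X),
      (forall k, 0 < t k) /\ t @ \oo --> 0 /\ ws @ \oo --> w /\
      (forall k, C (xb + t k *: v + (2^-1 * t k ^+ 2) *: ws k))].

Definition local_min_on (f : X -> R) (C : set X) (xb : X) : Prop :=
  C xb /\ exists2 e : R, 0 < e & forall x, C x -> ball xb e x -> f xb <= f x.

End Defs.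

From HB Require Import structures.
From mathcomp Require Import all_boot all_order all_algebra.
From mathcomp Require Import all_classical all_reals all_analysis.
From mathcomp Require Import ring lra.
Set Implicit Arguments. Unset Strict Implicit. Unset Printing Implicit Defensive.
Import Order.TTheory GRing.Theory Num.Theory.
Import numFieldNormedType.Exports.
Local Open Scope classical_set_scope.
Local Open Scope ring_scope.

(* The whole argument rests on FEASIBLE DIRECTIONS: d is one if the line
   xb + R d lies in L and <x_i^*, d> <= 0 for every constraint active at xb.
   1. Such a d keeps xb + s d inside C for all small s > 0.
   2. Every tangent vector v in T_C(xb) is a feasible direction; a second-order
      tangent vector w in T^2_C(xb, v) satisfies the feasibility conditions on
      the constraints that are active for both xb and v, so w + lam v is a
      feasible direction for lam large enough.
   3. Along a feasible direction d the quadratic f expands exactly as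
      f(xb + s d) - f(xb) = s <M xb + q, d> + s^2/2 <M d, d>, which is >= 0 for
      small s > 0 at a local minimizer; an elementary lemma on real quadratics
      then gives <M xb + q, d> >= 0, and <M d, d> >= 0 when the first term is 0.
   The three conclusions (c0), (c1'), (c2') are immediate combinations. *)

Section LinearFunctionals.
Context {R : realType} {X : normedModType R}.

Lemma lin_functional0 (f : X -> R) : lin_functional f -> f 0 = 0.
Proof.
move=> lf; have := lf 1 0 0; rewrite scale1r addr0 mul1r => h.
by have := congr1 (fun z => z - f 0) h; rewrite /= subrr addrK.
Qed.

Lemma lin_functionalD (f : X -> R) :
  lin_functional f -> forall x y, f (x + y) = f x + f y.
Proof. by move=> lf x y; rewrite -[x in LHS]scale1r lf mul1r. Qed.

Lemma lin_functionalZ (f : X -> R) :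
  lin_functional f -> forall c x, f (c *: x) = c * f x.
Proof. by move=> lf c x; rewrite -[_ *: _]addr0 lf lin_functional0 // addr0. Qed.

End LinearFunctionals.

Section RealFacts.
Context {R : realType}.

Lemma quadratic_nonneg_near0 (a b : R) :
  (\forall s \near 0^'+, 0 <= s * a + s ^+ 2 * b) -> 0 <= a /\ (a = 0 -> 0 <= b).
Proof.
move=> h; split.
  rewrite leNgt; apply/negP => a0.
  have e0 : 0 < - a / (`|b| + 1) by rewrite divr_gt0 // ?oppr_gt0 // ltr_wpDl.
  have : \forall s \near 0^'+,
      [/\ 0 < s, s < - a / (`|b| + 1) & 0 <= s * a + s ^+ 2 * b].
    near=> s; split; near: s; [exact: nbhs_right_gt | exact: nbhs_right_lt | exact: h].
  move=> /filter_ex [s [s0 + hs]]; rewrite ltr_pdivlMr ?ltr_wpDl // => se.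
  suff : s * a + s ^+ 2 * b < 0 by rewrite ltNge hs.
  by have := ler_norm b; have := normr_ge0 b; nra.
move=> a0; have : \forall s \near 0^'+, 0 < s /\ 0 <= s * a + s ^+ 2 * b.
  by apply: filterS2 (nbhs_right_gt 0) h => s.
move=> /filter_ex [s [s0]]; rewrite a0 mulr0 add0r.
by rewrite pmulr_rge0 ?exprn_gt0.
Unshelve. all: by end_near.
Qed.

Lemma cvg_nonpos (u : nat -> R) (l : R) :
  (forall k, u k <= 0) -> u @ \oo --> l -> l <= 0.
Proof.
move=> u_le0 ul.
have u_le0' : \forall k \near \oo, u k <= 0 by exact: nearW.
have := limr_le (cvgP _ ul) u_le0'.
by rewrite (cvg_lim _ ul) //; apply; exact: _.
Qed.

End RealFacts.

Section AffineDirections.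
Context {R : realType} {X : normedModType R}.
Variables (L : set X) (xb : X).
Hypothesis L_aff : closed_affine_subspace L.
Hypothesis Lxb : L xb.

Definition direction (d : X) : Prop := forall s : R, L (xb + s *: d).

Lemma direction_of_point (y : X) : L (xb + y) -> direction y.
Proof.
move=> Ly s; case: L_aff => _ [_ aff].
have := aff _ _ s Lxb Ly.
by rewrite scalerDr addrA -scalerDl subrK scale1r.
Qed.

Lemma directionZ (c : R) (d : X) : direction d -> direction (c *: d).
Proof. by move=> Dd s; rewrite scalerA. Qed.

(* xb + s (u + w) is the midpoint of xb + 2s u and xb + 2s w, both in L. *)
Lemma directionD (u w : X) : direction u -> direction w -> direction (u + w).
Proof.
move=> Du Dw s; case: L_aff => _ [_ aff].
have := aff _ _ (2^-1) (Du (2 * s)) (Dw (2 * s)).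
have -> : 1 - 2^-1 = 2^-1 :> R by field.
rewrite !scalerDr !scalerA mulrA mulVf ?pnatr_eq0 // mul1r addrACA -scalerDl.
have -> : (2^-1 + 2^-1 : R) = 1 by field.
by rewrite scale1r.
Qed.

Lemma direction_cvg (u : nat -> X) (w : X) :
  (forall k, direction (u k)) -> u @ \oo --> w -> direction w.
Proof.
move=> Du uw s; case: L_aff => Lcl _.
apply: (@closed_cvg _ _ \oo _ (fun k => xb + s *: u k) L Lcl).
  by apply: nearW => k; exact: Du.
by apply: cvgD; [exact: cvg_cst | apply: cvgZ => //; exact: cvg_cst].
Qed.

End AffineDirections.

Section PolyhedralSet.
Context {R : realType} {X : normedModType R}.
Variables (p : nat) (xs : 'I_p -> X -> R) (a : 'I_p -> R) (L : set X) (xb : X).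
Hypothesis xs_dual : forall i, dual_elem (xs i).
Hypothesis L_aff : closed_affine_subspace L.
Hypothesis Cxb : L xb /\ forall i, xs i xb <= a i.

Definition polyhedron : set X := [set x | L x /\ forall i, xs i x <= a i].

Definition feasible_dir (d : X) : Prop :=
  direction L xb d /\ forall i, xs i xb = a i -> xs i d <= 0.

Lemma active_cvg_nonpos (i : 'I_p) (c : nat -> R) (z : nat -> X) (w : X) :
  (forall k, 0 < c k) -> z @ \oo --> w ->
  (forall k, c k * xs i (z k) <= 0) -> xs i w <= 0.
Proof.
move=> c0 zw hz; have [_ ci] := xs_dual i.
apply: (@cvg_nonpos R (fun k => xs i (z k))); last exact: continuous_cvg _ (ci w) zw.
move=> k /=.
by rewrite -(pmulr_rle0 _ (c0 k)).
Qed.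

Lemma tangent_feasible (v : X) : tangent_cone polyhedron xb v -> feasible_dir v.
Proof.
move=> [t [vs [t0 [_ [vc Cv]]]]]; split.
  apply: (direction_cvg L_aff _ vc) => k.
  have := directionZ (t k)^-1 (direction_of_point L_aff Cxb.1 (Cv k).1).
  by rewrite scalerA mulVf ?gt_eqF // scale1r.
move=> i act; apply: (active_cvg_nonpos t0 vc) => k.
have [li _] := xs_dual i.
by have := (Cv k).2 i; rewrite (lin_functionalD li) (lin_functionalZ li) act gerDl.
Qed.

Lemma second_tangent_props (v w : X) : direction L xb v ->
  second_tangent_set polyhedron xb v w -> direction L xb w /\
  forall i, xs i xb = a i -> xs i v = 0 -> xs i w <= 0.
Proof.
move=> Dv [t [ws [t0 [_ [wc Cw]]]]].
have c0 k : 0 < 2^-1 * t k ^+ 2 by rewrite mulr_gt0 ?exprn_gt0.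
split.
  apply: (direction_cvg L_aff _ wc) => k.
  have Lk : L (xb + (t k *: v + (2^-1 * t k ^+ 2) *: ws k)).
    by rewrite addrA; exact: (Cw k).1.
  have := directionD L_aff (direction_of_point L_aff Cxb.1 Lk) (directionZ (- t k) Dv).
  move=> /(directionZ (2^-1 * t k ^+ 2)^-1).
  by rewrite scaleNr addrAC subrr add0r scalerA mulVf ?gt_eqF // scale1r.
move=> i act v0; apply: (active_cvg_nonpos c0 wc) => k.
have [li _] := xs_dual i.
have := (Cw k).2 i.
by rewrite !(lin_functionalD li) !(lin_functionalZ li) act v0 mulr0 addr0 gerDl.
Qed.

(* Adding a large multiple of a feasible direction v repairs the constraints
   that are active at xb but strictly decreasing along v. *)
Lemma feasible_dir_shift (v w : X) : feasible_dir v -> direction L xb w ->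
  (forall i, xs i xb = a i -> xs i v = 0 -> xs i w <= 0) ->
  exists lam : R, feasible_dir (w + lam *: v).
Proof.
move=> [Dv av] Dw aw; exists (\sum_(i < p) `|xs i w / xs i v|).
split; first exact: directionD Dw (directionZ _ Dv).
move=> i act; have [li _] := xs_dual i.
rewrite (lin_functionalD li) (lin_functionalZ li).
have [xv0|xvn] := eqVneq (xs i v) 0; first by rewrite xv0 mulr0 addr0 aw.
have xvlt : xs i v < 0 by rewrite lt_neqAle xvn av.
have hl : `|xs i w / xs i v| <= \sum_(j < p) `|xs j w / xs j v|.
  by rewrite (bigD1 i) //= lerDl sumr_ge0.
have hr : xs i w = (xs i w / xs i v) * xs i v by rewrite divfK // lt_eqF.
move: hl hr; set r := xs i w / xs i v => hl ->.
have := ler_norm (- r); rewrite normrN; nra.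
Qed.

(* Along a feasible direction, the points xb + s d stay in the polyhedron for
   small s > 0: active constraints do not increase, inactive ones have slack. *)
Lemma feasible_dir_near (d : X) : feasible_dir d ->
  \forall s \near 0^'+, polyhedron (xb + s *: d).
Proof.
move=> [Dd act]; near=> s; split; first exact: Dd.
near: s; apply: filter_forall => i.
have [li _] := xs_dual i.
have [e|ne] := eqVneq (xs i xb) (a i).
  near=> s; have s0 : 0 < s by near: s; exact: nbhs_right_gt.
  have := act i e; rewrite (lin_functionalD li) (lin_functionalZ li) e; nra.
have slack : 0 < a i - xs i xb by rewrite subr_gt0 lt_neqAle ne Cxb.2.
have hp : 0 < `|xs i d| + 1 by rewrite ltr_wpDl.
near=> s; have s0 : 0 < s by near: s; exact: nbhs_right_gt.
have : s < (a i - xs i xb) / (`|xs i d| + 1).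
  by near: s; apply: nbhs_right_lt; rewrite divr_gt0.
rewrite ltr_pdivlMr // => se.
have := ler_norm (xs i d); have := normr_ge0 (xs i d).
rewrite (lin_functionalD li) (lin_functionalZ li); nra.
Unshelve. all: by end_near.
Qed.

End PolyhedralSet.

Section LocalMinimum.
Context {R : realType} {X : normedModType R}.

Lemma near0_ball (xb d : X) (e : R) :
  0 < e -> \forall s \near 0^'+, ball xb e (xb + s *: d).
Proof.
move=> e0; have hp : 0 < `|d| + 1 by rewrite ltr_wpDl.
near=> s; have s0 : 0 < s by near: s; exact: nbhs_right_gt.
have : s < e / (`|d| + 1) by near: s; apply: nbhs_right_lt; rewrite divr_gt0.
rewrite ltr_pdivlMr // => se.
rewrite -ball_normE /ball_ /= opprD addrA subrr add0r normrN normrZ gtr0_norm //.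
have := normr_ge0 d; nra.
Unshelve. all: by end_near.
Qed.

Lemma local_min_along_ray (f : X -> R) (C : set X) (xb d : X) :
  local_min_on f C xb -> (\forall s \near 0^'+, C (xb + s *: d)) ->
  \forall s \near 0^'+, 0 <= f (xb + s *: d) - f xb.
Proof.
move=> [_ [e e0 hmin]] hC.
apply: filterS2 hC (near0_ball xb d e0) => s Cs Bs.
by rewrite subr_ge0; exact: hmin.
Qed.

Lemma quadratic_expansion (M : X -> X -> R) (q : X -> R) (alpha : R) :
  (forall x, lin_functional (M x)) -> (forall y, lin_functional (M^~ y)) ->
  (forall x y, M x y = M y x) -> lin_functional q ->
  forall x d s, let f := fun z => 2^-1 * M z z + q z + alpha in
  f (x + s *: d) - f x = s * (M x d + q d) + s ^+ 2 * (2^-1 * M d d).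
Proof.
move=> M2 M1 Msym lq x d s f.
rewrite /f !(lin_functionalD (M1 _)) !(lin_functionalZ (M1 _)).
rewrite !(lin_functionalD (M2 _)) !(lin_functionalZ (M2 _)) (Msym d x).
by rewrite (lin_functionalD lq) (lin_functionalZ lq); field.
Qed.

End LocalMinimum.

(* M x y stands for <M x, y>; M : X -> X^* bounded linear and symmetric. *)
Theorem theorem3p4 (R : realType) (X : completeNormedModType R)
  (C : set X) (M : X -> X -> R) (q : X -> R) (alpha : R) (xb : X) :
  C !=set0 ->
  gen_polyhedral_convex C ->
  (forall x, dual_elem (M x)) ->
  (forall (a : R) (x1 x2 y : X), M (a *: x1 + x2) y = a * M x1 y + M x2 y) ->
  (exists c : R, forall x y, `|M x y| <= c * `|x| * `|y|) ->
  (forall x y, M x y = M y x) ->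
  dual_elem q ->
  let f := fun x => 2^-1 * M x x + q x + alpha in
  local_min_on f C xb ->
  (forall v, tangent_cone C xb v -> 0 <= M xb v + q v) /\
  (forall v, tangent_cone C xb v -> M xb v + q v = 0 ->
     forall w, second_tangent_set C xb v w -> 0 <= M xb w + q w) /\
  (forall v, tangent_cone C xb v -> M xb v + q v = 0 -> 0 <= M v v).
Proof.
move=> _ [p [xs [a [L [xs_dual [L_aff ->]]]]]] M_dual M1 _ Msym [lq _] f xb_min.
have Cxb := xb_min.1.
have M2 x : lin_functional (M x) := (M_dual x).1.
have feasible_opt d : feasible_dir xs a L xb d ->
    0 <= M xb d + q d /\ (M xb d + q d = 0 -> 0 <= 2^-1 * M d d).
  move=> Fd; apply: quadratic_nonneg_near0.
  apply: filterS (local_min_along_ray xb_min (feasible_dir_near xs_dual Cxb Fd)).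
  by move=> s; rewrite (quadratic_expansion alpha M2 (fun y a x1 x2 => M1 a x1 x2 y)).
have tangent := tangent_feasible xs_dual L_aff Cxb.
split; first by move=> v /tangent /feasible_opt [].
split.
  move=> v /tangent Fv gv0 w /(second_tangent_props xs_dual L_aff Cxb Fv.1) [Dw aw].
  have [lam /feasible_opt [+ _]] := feasible_dir_shift xs_dual L_aff Fv Dw aw.
  have -> : M xb (w + lam *: v) + q (w + lam *: v) = M xb w + q w + lam * (M xb v + q v).
    rewrite (lin_functionalD (M2 xb)) (lin_functionalZ (M2 xb)).
    by rewrite (lin_functionalD lq) (lin_functionalZ lq); ring.
  by rewrite gv0 mulr0 addr0.
move=> v /tangent /feasible_opt [_ h2] /h2.
by rewrite pmulr_rge0 // invr_gt0.
Qed.
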